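(* Let $\mathfrak{g}$ be a complete Lie algebra. Then $\mathrm{HL}^2(\mathfrak{g},\mathfrak{g}_{\mathrm{ad}})\cong\mathrm{H}^2(\mathfrak{g},\mathfrak{g})$ and $\mathrm{HL}^3(\mathfrak{g},\mathfrak{g}_{\mathrm{ad}})\cong\mathrm{H}^3(\mathfrak{g},\mathfrak{g})$.
   Context: A Lie algebra $\mathfrak{g}$ is complete if $\mathrm{H}^0(\mathfrak{g},\mathfrak{g})=\mathrm{H}^1(\mathfrak{g},\mathfrak{g})=0$ (Chevalley–Eilenberg cohomology with adjoint coefficients). $\mathfrak{g}$ is regarded as a left Leibniz algebra with $xy=[x,y]$, and $\mathfrak{g}_{\mathrm{ad}}$ is the (symmetric) Leibniz bimodule $\mathfrak{g}$ with left and right multiplication as actions. $\mathrm{HL}^n(\mathfrak{g},M)$ is the cohomology of $\mathrm{Hom}(\mathfrak{g}^{\otimes n},M)$ with $(\mathrm{d}^nf)(x_1,\dots,x_{n+1})=\sum_{i=1}^n(-1)^{i+1}x_i\cdot f(\dots,\hat{x}_i,\dots)+(-1)^{n+1}f(x_1,\dots,x_n)\cdot x_{n+1}+\sum_{i<j}(-1)^if(x_1,\dots,\hat{x}_i,\dots,x_ix_j,\dots,x_{n+1})$ ($x_ix_j$ in the $j$-th position). *)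

From HB Require Import structures.
From mathcomp Require Import all_boot all_order all_algebra.
Set Implicit Arguments. Unset Strict Implicit. Unset Printing Implicit Defensive.
Import Order.TTheory GRing.Theory Num.Theory.
Local Open Scope ring_scope.

Definition is_lie_bracket (K : fieldType) (V : lmodType K) (br : V -> V -> V) : Prop :=
  [/\ (forall (a : K) (x y z : V), br (a *: x + y) z = a *: br x z + br y z),
      (forall (a : K) (x y z : V), br z (a *: x + y) = a *: br z x + br z y),
      (forall x : V, br x x = 0) &
      (forall x y z : V, br x (br y z) + br y (br z x) + br z (br x y) = 0)].

Section Cochains.
Variables (K : fieldType) (V : lmodType K) (br : V -> V -> V).

Definition cochain (n : nat) := ('I_n -> V) -> V.

Definition upd n (x : 'I_n -> V) (i : 'I_n) (v : V) : 'I_n -> V :=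
  fun k => if k == i then v else x k.

Definition multilinear n (f : cochain n) : Prop :=
  forall (x : 'I_n -> V) (i : 'I_n) (a : K) (u v : V),
    f (upd x i (a *: u + v)) = a *: f (upd x i u) + f (upd x i v).

Definition alternating n (f : cochain n) : Prop :=
  forall (x : 'I_n -> V) (i j : 'I_n), i != j -> x i = x j -> f x = 0.

Definition del n (x : 'I_n.+1 -> V) (i : 'I_n.+1) : 'I_n -> V :=
  fun k => x (lift i k).

(* Leibniz: (x_0, ..., \hat{x_i}, ..., x_i x_j, ..., x_n), with x_i x_j in the
   position previously occupied by x_j (i < j) *)
Definition leib_args n (x : 'I_n.+1 -> V) (i j : 'I_n.+1) : 'I_n -> V :=
  fun k => if lift i k == j then br (x i) (x j) else x (lift i k).

(* Leibniz coboundary d^n with coefficients in g_ad (left action x.m = [x,m],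
   right action m.x = [m,x]); indices are 0-based, so the 1-based signs
   (-1)^(i+1), (-1)^(n+1), (-1)^i become (-1)^i, (-1)^(n+1), (-1)^(i+1). *)
Definition leib_d n (f : cochain n) : cochain n.+1 :=
  fun x =>
    \sum_(i < n.+1 | (i < n)%N) (-1) ^+ i *: br (x i) (f (del x i))
    + (-1) ^+ n.+1 *: br (f (del x ord_max)) (x ord_max)
    + \sum_(i < n.+1) \sum_(j < n.+1 | (i < j)%N)
        (-1) ^+ i.+1 *: f (leib_args x i j).

(* Chevalley-Eilenberg: ([x_i,x_j], x_0, ..., \hat{x_i}, ..., \hat{x_j}, ..., x_n)
   for i < j *)
Definition ce_args n (x : 'I_n.+1 -> V) (i j : 'I_n.+1) : 'I_n -> V :=
  fun k => if val k == 0%N then br (x i) (x j)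
           else let k' := (val k).-1 in
                x (inord (if (k' < i)%N then k'
                          else if (k'.+1 < j)%N then k'.+1 else k'.+2)).

Definition ce_d n (f : cochain n) : cochain n.+1 :=
  fun x =>
    \sum_(i < n.+1) (-1) ^+ i *: br (x i) (f (del x i))
    + \sum_(i < n.+1) \sum_(j < n.+1 | (i < j)%N)
        (-1) ^+ (i + j) *: f (ce_args x i j).

Definition leib_cochain n (f : cochain n) : Prop := multilinear f.
Definition ce_cochain n (f : cochain n) : Prop := multilinear f /\ alternating f.

Definition leib_cocycle n (f : cochain n) : Prop :=
  leib_cochain f /\ forall x, leib_d f x = 0.
Definition leib_coboundary n (f : cochain n.+1) : Prop :=
  exists h : cochain n, leib_cochain h /\ forall x, f x = leib_d h x.

Definition ce_cocycle n (f : cochain n) : Prop :=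
  ce_cochain f /\ forall x, ce_d f x = 0.
Definition ce_coboundary n (f : cochain n.+1) : Prop :=
  exists h : cochain n, ce_cochain h /\ forall x, f x = ce_d h x.

(* g is complete: H^0(g,g) = 0 (every 0-cocycle vanishes; there are no
   coboundaries in degree 0) and H^1(g,g) = 0. *)
Definition complete_lie : Prop :=
  (forall f : cochain 0, ce_cocycle f -> forall x, f x = 0) /\
  (forall f : cochain 1, ce_cocycle f -> ce_coboundary f).

(* HL^{n+1}(g, g_ad) ~= H^{n+1}(g, g) as K-vector spaces: there is a map phi
   from Leibniz (n+1)-cochains to CE (n+1)-cochains which is K-linear on
   cocycles, maps cocycles to cocycles and coboundaries to coboundaries, and
   whose induced map on cohomology is injective and surjective. *)
Definition HL_iso_H n : Prop :=
  exists phi : cochain n.+1 -> cochain n.+1,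
    [/\ (forall f, leib_cocycle f -> ce_cocycle (phi f)),
        (forall (a : K) f g, leib_cocycle f -> leib_cocycle g ->
           forall x, phi (fun y => a *: f y + g y) x = a *: phi f x + phi g x),
        (forall f, leib_cocycle f -> leib_coboundary f -> ce_coboundary (phi f)),
        (forall f, leib_cocycle f -> ce_coboundary (phi f) -> leib_coboundary f) &
        (forall g, ce_cocycle g ->
           exists f, leib_cocycle f /\ ce_coboundary (fun y => phi f y - g y))].

End Cochains.

(* Degree 2: for a Leibniz 2-cocycle f, the cocycle identity at (x, x, z) says
   that f(x, x) is central, hence 0 because H^0 = 0.  So Leibniz 2-cocycles are
   alternating; on alternating cochains, and always in degree 1, the Leibniz and
   Chevalley-Eilenberg differentials agree, and the identity map induces the
   isomorphism.
   Degree 3: for a Leibniz 3-cocycle F, z |-> F(x, x, z) is a derivation, hence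
   inner because H^1 = 0: F(x, x, z) = [z, w(x)] with w quadratic.  Over any
   field a quadratic map is the diagonal of a bilinear map (built on a
   well-ordered Hamel basis); for h bilinear with h(x, x) = -w(x), F + d h
   vanishes when its first two arguments agree, and its cocycle identity then
   makes it alternating.  F |-> F + d h induces the isomorphism; its inverse is
   induced by the inclusion of alternating cochains. *)

From mathcomp Require Import all_boot all_order all_algebra zify.
From mathcomp Require Import boolp wochoice.
Set Implicit Arguments. Unset Strict Implicit. Unset Printing Implicit Defensive.
Import GRing.Theory.
Local Open Scope ring_scope.

(** * Cancellation in abelian groups *)

(* The tactic [zmod_cancel] proves an identity [l = r] in a zmodType that holds
   in every abelian group, by reifying [l - r] and checking that each atom
   occurs as often with sign + as with sign -. *)
Inductive zterm := ZAtom of nat | ZAdd of zterm & zterm | ZOpp of zterm | ZZero.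

Fixpoint zeval (U : zmodType) (env : seq U) (e : zterm) : U :=
  match e with
  | ZAtom n => nth 0 env n
  | ZAdd a b => zeval env a + zeval env b
  | ZOpp a => - zeval env a
  | ZZero => 0
  end.

Fixpoint signed_atoms (e : zterm) : seq (bool * nat) :=
  match e with
  | ZAtom n => [:: (false, n)]
  | ZAdd a b => signed_atoms a ++ signed_atoms b
  | ZOpp a => [seq (~~ p.1, p.2) | p <- signed_atoms a]
  | ZZero => [::]
  end.

Definition signed_sum (U : zmodType) (env : seq U) (l : seq (bool * nat)) : U :=
  \sum_(p <- l) (if p.1 then - nth 0 env p.2 else nth 0 env p.2).

Lemma zevalE (U : zmodType) (env : seq U) e : zeval env e = signed_sum env (signed_atoms e).
Proof.
rewrite /signed_sum; elim: e => [n|a iha b ihb|a iha|] /=.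
- by rewrite big_seq1.
- by rewrite big_cat /= iha ihb.
- rewrite iha big_map /= -sumrN; apply: eq_bigr => -[[] n] _ //=.
  by rewrite opprK.
- by rewrite big_nil.
Qed.

Definition balanced (l : seq (bool * nat)) :=
  all (fun p => count_mem (false, p.2) l == count_mem (true, p.2) l) l.

Lemma signed_sum_count (U : zmodType) (env : seq U) l N :
  all (fun p => p.2 < N)%N l ->
  signed_sum env l = \sum_(i <- iota 0 N)
     nth 0 env i *~ ((count_mem (false, i) l)%:Z - (count_mem (true, i) l)%:Z).
Proof.
rewrite /signed_sum; elim: l => [|p l IH] /=.
  by move=> _; rewrite big_nil big1 // => i _; rewrite subrr mulr0z.
case/andP=> pN /IH; rewrite big_cons => ->.
under [RHS]eq_bigr => i _ do
  rewrite !PoszD opprD addrACA mulrzDr.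
rewrite big_split /=; congr (_ + _).
have pin : p.2 \in iota 0 N by rewrite mem_iota.
rewrite (bigD1_seq p.2) ?iota_uniq //= big1 ?addr0.
  by case: p pN pin => -[] n /=; rewrite !eqxx /= ?subr0 ?sub0r ?mulrNz ?mulr1z.
move=> i /negbTE ne; case: p pN pin ne => b n /= _ _ ne.
by rewrite !xpair_eqE (eq_sym n) ne !andbF subrr mulr0z.
Qed.

Lemma balanced_signed_sum (U : zmodType) (env : seq U) l :
  balanced l -> signed_sum env l = 0.
Proof.
move=> bl; rewrite (@signed_sum_count _ _ _ (\max_(p <- l) p.2).+1); last first.
  by apply/allP => p pl; rewrite ltnS; exact: (@leq_bigmax_seq _ _ _ _ _ pl).
rewrite big1_seq // => i _.
case: (boolP ((false, i) \in l)) => [inl|].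
  by move/allP/(_ _ inl)/eqP: bl => /= ->; rewrite subrr mulr0z.
case: (boolP ((true, i) \in l)) => [inl|].
  by move/allP/(_ _ inl)/eqP: bl => /= ->; rewrite subrr mulr0z.
by move=> /count_memPn -> /count_memPn ->; rewrite subrr mulr0z.
Qed.

Ltac zfind a env k :=
  lazymatch env with
  | nil => constr:(@None nat)
  | cons a _ => constr:(Some k)
  | cons ?b ?e =>
      match goal with
      | _ => let _ := constr:(@Logic.eq_refl _ a : a = b) in constr:(Some k)
      | _ => zfind a e (S k)
      end
  end.

Ltac zreify t env :=
  lazymatch t with
  | @GRing.add _ ?a ?b =>
      lazymatch zreify a env with (?e1, ?env1) =>
      lazymatch zreify b env1 with (?e2, ?env2) => constr:((ZAdd e1 e2, env2)) end end
  | @GRing.opp _ ?a =>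
      lazymatch zreify a env with (?e1, ?env1) => constr:((ZOpp e1, env1)) end
  | @GRing.zero _ => constr:((ZZero, env))
  | _ =>
      lazymatch zfind t env 0%N with
      | Some ?k => constr:((ZAtom k, env))
      | None => let n := eval compute in (size env) in
                let env' := eval cbv beta iota delta [cat] in (env ++ [:: t]) in
                constr:((ZAtom n, env'))
      end
  end.

Ltac zmod_cancel :=
  lazymatch goal with
  | |- @eq ?U _ _ =>
    apply/eqP; rewrite -subr_eq0; apply/eqP;
    lazymatch goal with
    | |- @eq _ ?t _ =>
      lazymatch zreify t (@nil U) with (?e, ?env) =>
        change (zeval env e = 0); rewrite zevalE; apply: balanced_signed_sum;
        vm_compute; reflexivity
      end
    end
  end.

(** * Hamel bases and bilinear lifts of quadratic maps *)

Section WellOrder.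
Variable T : eqType.

Definition wo : rel T := sval (well_ordering_principle T).

Lemma wo_chainT : wo_chain wo predT.
Proof. exact: withinW (svalP (well_ordering_principle T)). Qed.

Lemma wo_total : total wo.
Proof. by move=> x y; exact: wo_chainW wo_chainT x y isT isT. Qed.

Lemma wo_refl : reflexive wo.
Proof. by move=> x; exact: wo_chain_reflexive wo_chainT x isT. Qed.

Lemma wo_anti : antisymmetric wo.
Proof. by move=> x y; exact: wo_chain_antisymmetric wo_chainT x y isT isT. Qed.

Lemma wo_min (P : T -> Prop) : (exists x, P x) -> exists z, P z /\ forall x, P x -> wo z x.
Proof.
move=> [x Px]; have [|z [[/asboolP Pz lb] _]] := svalP (well_ordering_principle T) [pred y | `[< P y >]].
  by exists x; rewrite inE; apply/asboolP.
by exists z; split=> // y Py; apply: lb; rewrite inE; apply/asboolP.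
Qed.

Lemma wo_trans : transitive wo.
Proof.
move=> y x z hxy hyz.
have [|m [/or3P[]/eqP-> lb]] := @wo_min (fun u => [|| u == x, u == y | u == z]).
  by exists x; rewrite eqxx.
- by apply: lb; rewrite eqxx !orbT.
- have -> : x = y by apply/wo_anti; rewrite hxy lb ?eqxx.
  exact: hyz.
- have <- : y = z by apply/wo_anti; rewrite hyz lb ?eqxx ?orbT.
  exact: hxy.
Qed.

Lemma wo_max_seq (s : seq T) : s != [::] -> exists2 m, m \in s & forall u, u \in s -> wo u m.
Proof.
elim: s => [//|v s IH] _.
have [->|/IH[m ms mmax]] := eqVneq s [::].
  by exists v; rewrite ?mem_head // => u; rewrite inE => /eqP ->; rewrite wo_refl.
case/orP: (wo_total m v) => [hmv|hvm].
  exists v; first exact: mem_head.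
  move=> u; rewrite inE => /orP[/eqP ->|us]; first exact: wo_refl.
  exact: wo_trans (mmax u us) hmv.
exists m; first by rewrite inE ms orbT.
by move=> u; rewrite inE => /orP[/eqP -> //|us]; exact: mmax.
Qed.

End WellOrder.

Section HamelBasis.
Variables (K : fieldType) (V : lmodType K).
Implicit Types (P Q : V -> Prop) (u v w : V) (s : seq V).

Definition span P v :=
  exists l : seq (K * V), (forall p, p \in l -> P p.2) /\ v = \sum_(p <- l) p.1 *: p.2.

Lemma span_uniq P v : span P v ->
  exists s, exists c : V -> K,
    [/\ uniq s, (forall u, u \in s -> P u) & v = \sum_(u <- s) c u *: u].
Proof.
case=> l [lP ->]; elim: l lP => [|[a x] l IH] lP.
  by exists [::], (fun _ => 0); rewrite !big_nil.
have [|s [c [us sP E]]] := IH; first by move=> p pl; apply: lP; rewrite inE pl orbT.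
have Px : P x by apply: (lP (a, x)); rewrite mem_head.
rewrite big_cons /= E; case: (boolP (x \in s)) => xs.
  exists s, (fun u => if u == x then a + c u else c u); split=> //.
  rewrite (bigD1_seq x) //= [in RHS](bigD1_seq x) //= eqxx scalerDl addrA.
  by congr (_ + _); apply: eq_bigr => u /negbTE ->.
exists (x :: s), (fun u => if u == x then a else c u); split.
- by rewrite /= xs.
- by move=> u; rewrite inE => /orP[/eqP ->|/sP].
- rewrite big_cons eqxx; congr (_ + _); apply: eq_big_seq => u us2.
  by case: eqP => // ux; rewrite -ux us2 in xs.
Qed.

Lemma span_mem P v : P v -> span P v.
Proof.
by move=> Pv; exists [:: (1, v)]; rewrite big_seq1 scale1r; split=> // p; rewrite inE => /eqP ->.
Qed.

Lemma span_sum P s (c : V -> K) :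
  (forall u, u \in s -> span P u) -> span P (\sum_(u <- s) c u *: u).
Proof.
elim: s => [|v s IH] sP; first by exists [::]; rewrite !big_nil.
have [|l1 [P1 E1]] := sP v; first exact: mem_head.
have [|l2 [P2 E2]] := IH; first by move=> u us; apply: sP; rewrite inE us orbT.
exists ([seq (c v * p.1, p.2) | p <- l1] ++ l2); split.
  by move=> p; rewrite mem_cat => /orP[/mapP[q /P1 ? ->]|/P2].
by rewrite big_cons big_cat big_map E1 E2 scaler_sumr; congr (_ + _);
  apply: eq_bigr => p _; rewrite scalerA.
Qed.

Lemma span_trans P Q v : (forall u, P u -> span Q u) -> span P v -> span Q v.
Proof. by move=> PQ /span_uniq [s [c [_ sP ->]]]; apply: span_sum => u /sP; exact: PQ. Qed.

(* Basis vectors are those that are not combinations of wo-smaller vectors: a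
   Hamel basis obtained from the well-ordering alone, without Zorn's lemma. *)
Definition basis_vec v : Prop := ~ span (fun u => wo u v /\ u <> v) v.

Lemma span_basis v : span basis_vec v.
Proof.
apply: contrapT => nv.
have [m [nm mmin]] := wo_min (ex_intro (fun v => ~ span basis_vec v) v nv).
apply: nm; have [/span_mem //|/contrapT] := pselect (basis_vec m).
apply: span_trans => u [um num]; apply: contrapT => nu.
by apply: num; apply/wo_anti; rewrite um mmin.
Qed.

Lemma basis_free s (c : V -> K) : uniq s -> (forall u, u \in s -> basis_vec u) ->
  \sum_(u <- s) c u *: u = 0 -> forall u, u \in s -> c u = 0.
Proof.
move=> us sB E; apply: contrapT => /existsNP [u0] /not_implyP [u0s cu0].
set s' := [seq u <- s | c u != 0].
have s'ne : s' != [::].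
  apply/eqP => s'0; apply: cu0; apply/eqP; apply: negbFE.
  by rewrite -(andbT (_ != _)) -u0s -(mem_filter (fun u => c u != 0)) -/s' s'0.
have [m ms' mmax] := wo_max_seq s'ne.
move: (ms'); rewrite mem_filter => /andP[cm ms].
apply: (sB m ms).
have E' : \sum_(u <- s') c u *: u = 0.
  rewrite big_filter big_mkcond /= -[RHS]E; apply: eq_bigr => u _.
  by case: eqP => [->|] /=; rewrite ?scale0r.
rewrite (bigD1_seq m) ?filter_uniq //= in E'.
exists [seq (- c u / c m, u) | u <- s' & u != m]; split.
  move=> p /mapP [u]; rewrite mem_filter => /andP[um us1] -> /=.
  by split; [exact: mmax | exact/eqP].
rewrite big_map big_filter /=.
have Ee : c m *: m = - \sum_(u <- s' | u != m) c u *: u by apply/eqP; rewrite -addr_eq0 E'.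
transitivity ((c m)^-1 *: (c m *: m)); first by rewrite scalerA mulVf // scale1r.
rewrite Ee scalerN scaler_sumr -sumrN; apply: eq_bigr => u _.
by rewrite scalerA mulNr scaleNr mulrC.
Qed.

Lemma big_uniq_subseq (U : zmodType) s1 s2 (F : V -> U) :
  uniq s1 -> uniq s2 -> {subset s1 <= s2} ->
  (forall u, u \in s2 -> u \notin s1 -> F u = 0) ->
  \sum_(u <- s1) F u = \sum_(u <- s2) F u.
Proof.
move=> u1 u2 sub F0.
rewrite [RHS](bigID [in s1]) /= [X in _ + X]big1_seq ?addr0; last first.
  by move=> u /andP[nu us2]; apply: F0.
rewrite -[RHS]big_filter (perm_big [seq i <- s2 | i \in s1]) //.
apply: uniq_perm => //; first exact: filter_uniq.
by move=> u; rewrite mem_filter; case: (boolP (u \in s1)) => // /sub ->.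
Qed.

Lemma basis_decomposition v : exists r : seq V * (V -> K),
  [/\ uniq r.1, (forall u, u \in r.1 -> basis_vec u) & v = \sum_(u <- r.1) r.2 u *: u].
Proof. by have [s [c [us sB E]]] := span_uniq (span_basis v); exists (s, c). Qed.

Definition supp v := (projT1 (cid (basis_decomposition v))).1.
Definition coord v u :=
  if u \in supp v then (projT1 (cid (basis_decomposition v))).2 u else 0.

Lemma supp_uniq v : uniq (supp v).
Proof. by case: (projT2 (cid (basis_decomposition v))). Qed.

Lemma supp_basis v u : u \in supp v -> basis_vec u.
Proof. by case: (projT2 (cid (basis_decomposition v))) => _ sB _; apply: sB. Qed.

Lemma coord_supp v u : u \notin supp v -> coord v u = 0.
Proof. by rewrite /coord => /negbTE ->. Qed.

Lemma coord_expand v s : uniq s -> {subset supp v <= s} -> v = \sum_(u <- s) coord v u *: u.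
Proof.
move=> us sub; case: (projT2 (cid (basis_decomposition v))) => su _ E.
rewrite -(@big_uniq_subseq _ (supp v)) //; last by move=> u _ /coord_supp ->; rewrite scale0r.
by rewrite {1}E; apply: eq_big_seq => u uin; rewrite /coord -/(supp v) uin.
Qed.

Lemma coord_linear a v w u : coord (a *: v + w) u = a * coord v u + coord w u.
Proof.
have [Bu|Bu] := pselect (basis_vec u); last first.
  have nu x : u \notin supp x by apply/negP => /supp_basis.
  by rewrite !coord_supp // mulr0 addr0.
set s := undup (u :: supp v ++ supp w ++ supp (a *: v + w)).
have us : uniq s by exact: undup_uniq.
have sB x : x \in s -> basis_vec x.
  by rewrite mem_undup inE !mem_cat => /orP[/eqP ->//|/or3P[]]; exact: supp_basis.
have E1 := @coord_expand v s us; have E2 := @coord_expand w s us.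
have E3 := @coord_expand (a *: v + w) s us.
have Z : \sum_(x <- s) (coord (a *: v + w) x - (a * coord v x + coord w x)) *: x = 0.
  under eq_bigr => x _ do rewrite scalerBl scalerDl -scalerA.
  rewrite sumrB big_split /= -scaler_sumr -E1 -?E2 -?E3 ?subrr //;
    by move=> y yv; rewrite mem_undup inE !mem_cat yv !orbT.
by apply/eqP; rewrite -subr_eq0; apply/eqP; apply: (basis_free us sB Z); rewrite mem_undup mem_head.
Qed.

End HamelBasis.

Section BilinearLift.
Variables (K : fieldType) (V W : lmodType K).
Implicit Types (q : V -> W) (x y : V).

Definition polar q x y := q (x + y) - q x - q y.

Definition quadratic q :=
  (forall a x, q (a *: x) = a ^+ 2 *: q x) /\ (forall y, linear (polar q ^~ y)).

(* On basis vectors: [q u] on the diagonal, the polar form above it (for the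
   well-order) and [0] below it, so that the diagonal of [bilift q] is [q]
   over any field, including characteristic 2. *)
Definition upper_polar q (u u' : V) : W :=
  if u == u' then q u else if wo u u' then polar q u u' else 0.

Definition bilift q x y : W :=
  \sum_(u <- supp x) \sum_(u' <- supp y) (coord x u * coord y u') *: upper_polar q u u'.

Lemma bilift_supp q x y (s t : seq V) : uniq s -> uniq t ->
  {subset supp x <= s} -> {subset supp y <= t} ->
  bilift q x y = \sum_(u <- s) \sum_(u' <- t) (coord x u * coord y u') *: upper_polar q u u'.
Proof.
move=> us ut sx sy; rewrite /bilift (@big_uniq_subseq _ _ _ (supp x) s) ?supp_uniq //; last first.
  by move=> u _ /coord_supp ->; apply: big1 => u' _; rewrite mul0r scale0r.
apply: eq_bigr => u _; apply: big_uniq_subseq => //; first exact: supp_uniq.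
by move=> u' _ /coord_supp ->; rewrite mulr0 scale0r.
Qed.

Lemma bilift_linearl q y : linear (bilift q ^~ y).
Proof.
move=> a x x'; set s := undup (supp x ++ supp x' ++ supp (a *: x + x')).
rewrite !(@bilift_supp q _ y s (supp y)) ?undup_uniq ?supp_uniq //;
  try by move=> z zs; rewrite mem_undup !mem_cat zs ?orbT.
rewrite scaler_sumr -big_split; apply: eq_bigr => u _.
rewrite scaler_sumr -big_split; apply: eq_bigr => u' _.
by rewrite coord_linear mulrDl scalerDl scalerA mulrA.
Qed.

Lemma bilift_linearr q x : linear (bilift q x).
Proof.
move=> a y y'; set t := undup (supp y ++ supp y' ++ supp (a *: y + y')).
rewrite !(@bilift_supp q x _ (supp x) t) ?undup_uniq ?supp_uniq //;
  try by move=> z zs; rewrite mem_undup !mem_cat zs ?orbT.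
rewrite scaler_sumr -big_split; apply: eq_bigr => u _.
rewrite scaler_sumr -big_split; apply: eq_bigr => u' _.
by rewrite coord_linear mulrDr scalerDl scalerA mulrCA.
Qed.

Lemma bilift_combination q q1 q2 a : (forall x, q x = a *: q1 x + q2 x) ->
  forall x y, bilift q x y = a *: bilift q1 x y + bilift q2 x y.
Proof.
move=> E x y; have Eu u u' : upper_polar q u u' = a *: upper_polar q1 u u' + upper_polar q2 u u'.
  rewrite /upper_polar; case: eqP => _; first by rewrite E.
  by case: (wo u u'); rewrite ?scaler0 ?addr0 // /polar !E !scalerBr; zmod_cancel.
rewrite /bilift scaler_sumr -big_split; apply: eq_bigr => u _.
rewrite scaler_sumr -big_split; apply: eq_bigr => u' _.
by rewrite Eu scalerDr !scalerA [_ * a]mulrC.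
Qed.

Lemma polarC q x y : polar q x y = polar q y x.
Proof. by rewrite /polar [y + x]addrC; zmod_cancel. Qed.

Lemma quadratic0 q : quadratic q -> q 0 = 0.
Proof. by case=> qZ _; rewrite -(scale0r 0) qZ expr2 mul0r !scale0r. Qed.

Lemma polar0 q x : quadratic q -> polar q x 0 = 0.
Proof. by move=> qq; rewrite /polar addr0 quadratic0 // subr0 subrr. Qed.

Lemma polar_sum q x (t : seq V) (c : V -> K) : quadratic q ->
  polar q x (\sum_(u <- t) c u *: u) = \sum_(u <- t) c u *: polar q x u.
Proof.
move=> qq; elim: t => [|v t IH]; first by rewrite !big_nil polar0.
by rewrite !big_cons polarC qq.2 -IH !(polarC _ x).
Qed.

Lemma quadratic_sum q (t : seq V) (c : V -> K) : quadratic q -> uniq t ->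
  q (\sum_(u <- t) c u *: u) =
  \sum_(u <- t) \sum_(u' <- t) (c u * c u') *: upper_polar q u u'.
Proof.
move=> qq; elim: t => [|v t IH] /=; first by rewrite !big_nil quadratic0.
case/andP=> vt ut; set Y := \sum_(u <- t) c u *: u.
have Hsym u' : u' \in t -> upper_polar q v u' + upper_polar q u' v = polar q v u'.
  move=> u't; have nv : (v == u') = false by apply: contraNF vt => /eqP ->.
  rewrite /upper_polar nv eq_sym nv.
  case: (boolP (wo v u')) => Rvu.
    case: (boolP (wo u' v)) => Ruv; last by rewrite addr0.
    by move: nv; rewrite (@wo_anti _ v u') ?Rvu ?Ruv // eqxx.
  by have := wo_total v u'; rewrite (negbTE Rvu) /= => ->; rewrite add0r polarC.
have Ecross : \sum_(j <- t) (c v * c j) *: upper_polar q v j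
              + \sum_(j <- t) (c j * c v) *: upper_polar q j v = c v *: polar q v Y.
  rewrite /Y polar_sum // scaler_sumr -big_split; apply: eq_big_seq => j jt /=.
  by rewrite [c j * _]mulrC -scalerDr Hsym // scalerA.
have Ev : q (c v *: v + Y) = (c v * c v) *: q v + q Y + c v *: polar q v Y.
  have -> : q (c v *: v + Y) = q (c v *: v) + q Y + polar q (c v *: v) Y.
    by rewrite /polar; zmod_cancel.
  have := qq.2 Y (c v) v 0; rewrite addr0 (polarC q 0) polar0 // addr0 => ->.
  by rewrite qq.1 expr2.
have Evv : upper_polar q v v = q v by rewrite /upper_polar eqxx.
rewrite !big_cons -/Y Ev IH // -Ecross Evv.
under [X in _ = _ + X]eq_bigr => j _ do rewrite big_cons.
by rewrite big_split /=; zmod_cancel.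
Qed.

Lemma bilift_diag q : quadratic q -> forall x, bilift q x x = q x.
Proof.
move=> qq x; rewrite /bilift -quadratic_sum ?supp_uniq //.
by rewrite -coord_expand ?supp_uniq.
Qed.

Lemma bilift_eq0 q x y : (forall x, q x = 0) -> bilift q x y = 0.
Proof.
move=> q0; rewrite /bilift big1 // => u _; rewrite big1 // => u' _.
have -> : upper_polar q u u' = 0.
  by rewrite /upper_polar /polar !q0 !subr0; case: ifP => //; case: ifP.
exact: scaler0.
Qed.

End BilinearLift.

(** * Leibniz and Chevalley-Eilenberg differentials in low degrees *)

Lemma linear_fun0 (K : fieldType) (U W : lmodType K) (g : U -> W) : linear g -> g 0 = 0.
Proof.
by move=> gL; have := gL 1 0 0; rewrite !scale1r addr0 => E; apply: (addrI (g 0)); rewrite addr0 -E.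
Qed.

Lemma linear_funD (K : fieldType) (U W : lmodType K) (g : U -> W) :
  linear g -> {morph g : u v / u + v}.
Proof. by move=> gL u v; have := gL 1 u v; rewrite !scale1r. Qed.

Lemma linear_funZ (K : fieldType) (U W : lmodType K) (g : U -> W) :
  linear g -> forall a, {morph g : u / a *: u}.
Proof. by move=> gL a u; have := gL a u 0; rewrite !addr0 linear_fun0 // addr0. Qed.

Lemma linear_fun_add (K : fieldType) (U W : lmodType K) (g1 g2 : U -> W) :
  linear g1 -> linear g2 -> linear (fun u => g1 u + g2 u).
Proof. by move=> L1 L2 a u v; rewrite L1 L2 scalerDr; zmod_cancel. Qed.

Lemma linear_fun_combination (K : fieldType) (U W : lmodType K) (g1 g2 : U -> W) s :
  linear g1 -> linear g2 -> linear (fun u => s *: g1 u + g2 u).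
Proof.
move=> L1 L2 a u v; rewrite L1 L2 !scalerDr !scalerA [s * a]mulrC; zmod_cancel.
Qed.

Section Cochains.
Variables (K : fieldType) (V : lmodType K) (br : V -> V -> V).

Definition tup n (s : seq V) : 'I_n -> V := fun k => nth 0 s k.

Local Notation T0 := (@tup 0 [::]).
Local Notation T1 a := (@tup 1 [:: a]).
Local Notation T2 a b := (@tup 2 [:: a; b]).
Local Notation T3 a b c := (@tup 3 [:: a; b; c]).
Local Notation T4 a b c d := (@tup 4 [:: a; b; c; d]).

Lemma tup_eta n (x : 'I_n.+1 -> V) : x = @tup n.+1 [seq x (inord m) | m <- iota 0 n.+1].
Proof.
apply: funext => k.
by rewrite /tup (nth_map 0%N) ?size_iota // nth_iota // add0n inord_val.
Qed.

Lemma tup1_eta (x : 'I_1 -> V) : x = T1 (x (inord 0)).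
Proof. exact: tup_eta. Qed.
Lemma tup2_eta (x : 'I_2 -> V) : x = T2 (x (inord 0)) (x (inord 1)).
Proof. exact: tup_eta. Qed.
Lemma tup3_eta (x : 'I_3 -> V) : x = T3 (x (inord 0)) (x (inord 1)) (x (inord 2)).
Proof. exact: tup_eta. Qed.
Lemma tup4_eta (x : 'I_4 -> V) : x = T4 (x (inord 0)) (x (inord 1)) (x (inord 2)) (x (inord 3)).
Proof. exact: tup_eta. Qed.

Lemma del_tup n (s : seq V) (i : 'I_n.+1) :
  del (@tup n.+1 s) i = @tup n (take i s ++ drop i.+1 s).
Proof.
apply: funext => k; rewrite /del /tup /= /bump.
have [his|his] := ltnP (size s) i.
  rewrite take_oversize ?drop_oversize ?cats0; try lia.
  case: (leqP i k) => hik /=; last by rewrite add0n.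
  by rewrite !nth_default //; lia.
rewrite nth_cat size_take_min (minn_idPl his).
case: (ltnP k i) => hik /=; first by rewrite (nth_take _ hik) add0n.
by rewrite nth_drop add1n; congr nth; lia.
Qed.

Lemma leib_args_tup n (s : seq V) (i j : 'I_n.+1) :
  leib_args br (@tup n.+1 s) i j =
  del (@tup n.+1 (set_nth 0 s j (br (nth 0 s i) (nth 0 s j)))) i.
Proof. by apply: funext => k; rewrite /leib_args /del /tup nth_set_nth. Qed.

Lemma ce_args_tup n (s : seq V) (i j : 'I_n.+1) :
  ce_args br (@tup n.+1 s) i j =
  @tup n [seq (if m == 0%N then br (nth 0 s i) (nth 0 s j) else
       nth 0 s (@inord n (if (m.-1 < i)%N then m.-1
                          else if (m.-1.+1 < j)%N then m.-1.+1 else m.-1.+2)))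
         | m <- iota 0 n].
Proof.
case: n i j => [|n] i j; first by apply: funext => -[].
rewrite [LHS]tup_eta; congr tup; apply/eq_in_map => m; rewrite mem_iota add0n => /andP[_ hm].
by rewrite /ce_args (_ : val (@inord n m) = m) //; exact: inordK.
Qed.

Ltac expand_d :=
  rewrite ?/leib_d ?/ce_d; do 6! (rewrite ?big_mkcond /= ?big_ord_recr ?big_ord0 /=);
  rewrite ?leib_args_tup ?del_tup ?ce_args_tup /= ?inordK //=;
  rewrite ?expr0 ?expr1 ?exprS ?mulN1r ?opprK ?mulr1 ?scale1r ?scaleN1r ?scaleNr ?opprK;
  zmod_cancel.

Lemma leib_d1E (h : cochain V 1) a b :
  leib_d br h (T2 a b) = br a (h (T1 b)) + br (h (T1 a)) b - h (T1 (br a b)).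
Proof. expand_d. Qed.

Lemma leib_d2E (h : cochain V 2) a b c :
  leib_d br h (T3 a b c) = br a (h (T2 b c)) - br b (h (T2 a c)) - br (h (T2 a b)) c
    - h (T2 (br a b) c) - h (T2 b (br a c)) + h (T2 a (br b c)).
Proof. expand_d. Qed.

Lemma leib_d3E (F : cochain V 3) a b c d :
  leib_d br F (T4 a b c d) = br a (F (T3 b c d)) - br b (F (T3 a c d)) + br c (F (T3 a b d))
    + br (F (T3 a b c)) d - F (T3 (br a b) c d) - F (T3 b (br a c) d) - F (T3 b c (br a d))
    + F (T3 a (br b c) d) + F (T3 a c (br b d)) - F (T3 a b (br c d)).
Proof. expand_d. Qed.

Lemma ce_d0E (h : cochain V 0) a : ce_d br h (T1 a) = br a (h T0).
Proof. expand_d. Qed.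

Lemma ce_d1E (h : cochain V 1) a b :
  ce_d br h (T2 a b) = br a (h (T1 b)) - br b (h (T1 a)) - h (T1 (br a b)).
Proof. expand_d. Qed.

Lemma ce_d2E (h : cochain V 2) a b c :
  ce_d br h (T3 a b c) = br a (h (T2 b c)) - br b (h (T2 a c)) + br c (h (T2 a b))
    - h (T2 (br a b) c) + h (T2 (br a c) b) - h (T2 (br b c) a).
Proof. expand_d. Qed.

Lemma ce_d3E (F : cochain V 3) a b c d :
  ce_d br F (T4 a b c d) = br a (F (T3 b c d)) - br b (F (T3 a c d)) + br c (F (T3 a b d))
    - br d (F (T3 a b c)) - F (T3 (br a b) c d) + F (T3 (br a c) b d) - F (T3 (br a d) b c)
    - F (T3 (br b c) a d) + F (T3 (br b d) a c) - F (T3 (br c d) a b).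
Proof. expand_d. Qed.

Lemma upd_tup n (s : seq V) (i : 'I_n) y : upd (@tup n s) i y = @tup n (set_nth 0 s i y).
Proof. by apply: funext => k; rewrite /upd /tup nth_set_nth. Qed.

Definition bilinear2 (h : cochain V 2) :=
  (forall w, linear (fun u => h (T2 u w))) /\ (forall w, linear (fun u => h (T2 w u))).

Lemma bilinear2_combination s (h k : cochain V 2) :
  bilinear2 h -> bilinear2 k -> bilinear2 (fun y => s *: h y + k y).
Proof. by case=> h1 h2 [k1 k2]; split=> w; apply: linear_fun_combination. Qed.

Definition trilinear3 (F : cochain V 3) :=
  [/\ forall w z, linear (fun u => F (T3 u w z)),
      forall w z, linear (fun u => F (T3 w u z)) &
      forall w z, linear (fun u => F (T3 w z u))].

Lemma multilinear1P (h : cochain V 1) : multilinear h <-> linear (fun u => h (T1 u)).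
Proof.
split=> [hL a u v|hL x i a u v]; first by have := hL (T1 0) ord0 a u v; rewrite !upd_tup.
by rewrite [x]tup_eta !upd_tup; case: i => -[|//] _ /=; exact: hL.
Qed.

Lemma multilinear2P (h : cochain V 2) : multilinear h <-> bilinear2 h.
Proof.
split=> [hL|[hL1 hL2] x i a u v].
  split=> w a u v; first by have := hL (T2 0 w) ord0 a u v; rewrite !upd_tup.
  by have := hL (T2 w 0) (inord 1) a u v; rewrite !upd_tup /= !inordK.
by rewrite [x]tup_eta !upd_tup; case: i => -[|[|//]] _ /=; [exact: hL1 | exact: hL2].
Qed.

Lemma multilinear3P (F : cochain V 3) : multilinear F <-> trilinear3 F.
Proof.
split=> [FL|[FL1 FL2 FL3] x i a u v].
  split=> w z a u v.
  - by have := FL (T3 0 w z) ord0 a u v; rewrite !upd_tup.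
  - by have := FL (T3 w 0 z) (inord 1) a u v; rewrite !upd_tup /= !inordK.
  - by have := FL (T3 w z 0) (inord 2) a u v; rewrite !upd_tup /= !inordK.
rewrite [x]tup_eta !upd_tup.
by case: i => -[|[|[|//]]] _ /=; [exact: FL1 | exact: FL2 | exact: FL3].
Qed.

Lemma alternating0 (h : cochain V 0) : alternating h.
Proof. by move=> x []. Qed.

Lemma alternating1 (h : cochain V 1) : alternating h.
Proof. by move=> x [[|//] ?] [[|//] ?]. Qed.

Lemma alternating2P (h : cochain V 2) : alternating h <-> forall a, h (T2 a a) = 0.
Proof.
split=> [hA a|hA x i j].
  apply: (hA _ ord0 (inord 1)); first by apply/eqP => /(congr1 val); rewrite /= inordK.
  by rewrite /tup /= inordK.
rewrite [x]tup_eta /=; move: (x (inord 0)) (x (inord 1)) => a0 a1.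
by case: i => -[|[|//]] ?; case: j => -[|[|//]] ? //=; rewrite /tup /= => _ ->; exact: hA.
Qed.

Lemma alternating3P (F : cochain V 3) : alternating F <->
  [/\ forall a b, F (T3 a a b) = 0, forall a b, F (T3 a b b) = 0 & forall a b, F (T3 a b a) = 0].
Proof.
split=> [FA|[FA1 FA2 FA3] x i j].
  split=> a b; [apply: (FA _ ord0 (inord 1)) | apply: (FA _ (inord 1) (inord 2)) |
                apply: (FA _ ord0 (inord 2))];
    by [apply/eqP => /(congr1 val); rewrite /= ?inordK | rewrite /tup /= ?inordK].
rewrite [x]tup_eta /=; move: (x (inord 0)) (x (inord 1)) (x (inord 2)) => a0 a1 a2.
case: i => -[|[|[|//]]] ?; case: j => -[|[|[|//]]] ? //=; rewrite /tup /= => _ ->;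
  by [exact: FA1 | exact: FA2 | exact: FA3].
Qed.

Lemma ce_d_zero n (x : 'I_n.+1 -> V) : (forall z, br z 0 = 0) ->
  ce_d br (fun _ : 'I_n -> V => 0) x = 0.
Proof.
move=> br0; rewrite /ce_d big1 ?add0r => [|i _]; last by rewrite br0 scaler0.
by rewrite big1 // => i _; rewrite big1 // => j _; rewrite scaler0.
Qed.

Lemma ce_cochain_zero n : ce_cochain (fun _ : 'I_n -> V => 0).
Proof. by split=> [x i a u v|x i j _ _]; rewrite ?scaler0 ?addr0. Qed.

Section LieAlgebra.
Hypothesis lie : is_lie_bracket br.

Lemma brDl x y z : br (x + y) z = br x z + br y z.
Proof. by have [brL _ _ _] := lie; have := brL 1 x y z; rewrite !scale1r. Qed.
Lemma brDr x y z : br z (x + y) = br z x + br z y.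
Proof. by have [_ brL _ _] := lie; have := brL 1 x y z; rewrite !scale1r. Qed.
Lemma br0l z : br 0 z = 0.
Proof. by apply: (addrI (br 0 z)); rewrite -brDl !addr0. Qed.
Lemma br0r z : br z 0 = 0.
Proof. by apply: (addrI (br z 0)); rewrite -brDr !addr0. Qed.
Lemma brZl a x z : br (a *: x) z = a *: br x z.
Proof. by have [brL _ _ _] := lie; have := brL a x 0 z; rewrite !addr0 br0l addr0. Qed.
Lemma brZr a x z : br z (a *: x) = a *: br z x.
Proof. by have [_ brL _ _] := lie; have := brL a x 0 z; rewrite !addr0 br0r addr0. Qed.
Lemma brNl x z : br (- x) z = - br x z.
Proof. by rewrite -scaleN1r brZl scaleN1r. Qed.
Lemma brNr x z : br z (- x) = - br z x.
Proof. by rewrite -scaleN1r brZr scaleN1r. Qed.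
Lemma brBr x y z : br z (x - y) = br z x - br z y.
Proof. by rewrite brDr brNr. Qed.
Lemma brxx x : br x x = 0.
Proof. by case: lie. Qed.

Lemma br_anti x y : br x y = - br y x.
Proof.
apply/eqP; rewrite -addr_eq0; apply/eqP.
by have := brxx (x + y); rewrite brDl !brDr !brxx add0r addr0.
Qed.

Lemma br_leibniz p q r : br p (br q r) = br (br p q) r + br q (br p r).
Proof.
have [_ _ _ jacobi] := lie; apply/eqP; rewrite -subr_eq0; apply/eqP.
by rewrite -(jacobi p q r) (br_anti (br p q) r) (br_anti p r) brNr; zmod_cancel.
Qed.

Lemma leib_d1_ce_d1 (h : cochain V 1) x : leib_d br h x = ce_d br h x.
Proof. by rewrite [x]tup2_eta leib_d1E ce_d1E (br_anti (h _)); zmod_cancel. Qed.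

Lemma leib_d2_combination (h k1 k2 : cochain V 2) (s : K) :
  (forall u v, h (T2 u v) = s *: k1 (T2 u v) + k2 (T2 u v)) ->
  forall a b c, leib_d br h (T3 a b c) = s *: leib_d br k1 (T3 a b c) + leib_d br k2 (T3 a b c).
Proof.
move=> E a b c; rewrite !leib_d2E !E !(brDl, brDr, brZl, brZr, scalerDr, scalerBr, scalerN).
zmod_cancel.
Qed.

Lemma leib_d3D (F G : cochain V 3) a b c d :
  leib_d br (fun y => F y + G y) (T4 a b c d) = leib_d br F (T4 a b c d) + leib_d br G (T4 a b c d).
Proof. by rewrite !leib_d3E !(brDl, brDr); zmod_cancel. Qed.

Section Bilinear.
Variable h : cochain V 2.
Hypothesis hB : bilinear2 h.

Lemma bilinDl u v w : h (T2 (u + v) w) = h (T2 u w) + h (T2 v w).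
Proof. exact: (linear_funD (hB.1 w)). Qed.
Lemma bilinDr u v w : h (T2 w (u + v)) = h (T2 w u) + h (T2 w v).
Proof. exact: (linear_funD (hB.2 w)). Qed.
Lemma bilinZl a u w : h (T2 (a *: u) w) = a *: h (T2 u w).
Proof. exact: (linear_funZ (hB.1 w)). Qed.
Lemma bilinZr a u w : h (T2 w (a *: u)) = a *: h (T2 w u).
Proof. exact: (linear_funZ (hB.2 w)). Qed.
Lemma bilin0l w : h (T2 0 w) = 0.
Proof. exact: (linear_fun0 (hB.1 w)). Qed.

Lemma bilin_anti : (forall a, h (T2 a a) = 0) -> forall u v, h (T2 u v) = - h (T2 v u).
Proof.
move=> h0 u v; apply/eqP; rewrite -addr_eq0; apply/eqP.
by have := h0 (u + v); rewrite bilinDl !bilinDr !h0 add0r addr0.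
Qed.

Lemma leib_d2_ce_d2 : (forall a, h (T2 a a) = 0) -> forall x, leib_d br h x = ce_d br h x.
Proof.
move=> h0 x; rewrite [x]tup3_eta leib_d2E ce_d2E.
by rewrite !(bilin_anti h0 _ (br _ _)) (br_anti (h _)); zmod_cancel.
Qed.

Lemma leib_d2_trilinear : trilinear3 (leib_d br h).
Proof.
by split=> w z a u v; rewrite !leib_d2E !(brDl, brDr, brZl, brZr, bilinDl, bilinDr,
  bilinZl, bilinZr, brDl, brDr, brZl, brZr, scalerDr, scalerBr, scalerN); zmod_cancel.
Qed.

Lemma leib_d2_diag a z : leib_d br h (T3 a a z) = br z (h (T2 a a)).
Proof. by rewrite leib_d2E brxx bilin0l (br_anti (h _) z); zmod_cancel. Qed.

Lemma leib_d_d2 a b c d : leib_d br (leib_d br h) (T4 a b c d) = 0.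
Proof.
rewrite leib_d3E !leib_d2E !(brDl, brDr, brNl, brNr).
rewrite (br_leibniz a b (h _)) (br_leibniz a c (h _)) (br_leibniz a (h _) d).
rewrite (br_leibniz b c (h _)) (br_leibniz b (h _) d) (br_leibniz (h _) c d).
rewrite (br_leibniz a b c) (br_leibniz a b d) (br_leibniz a c d) (br_leibniz b c d).
rewrite !(bilinDl, bilinDr, brDl, brDr); zmod_cancel.
Qed.

End Bilinear.

Section Trilinear.
Variable F : cochain V 3.
Hypothesis FT : trilinear3 F.

Lemma trilinD1 u v w z : F (T3 (u + v) w z) = F (T3 u w z) + F (T3 v w z).
Proof. by have [FL _ _] := FT; exact: (linear_funD (FL w z)). Qed.
Lemma trilinD2 u v w z : F (T3 w (u + v) z) = F (T3 w u z) + F (T3 w v z).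
Proof. by have [_ FL _] := FT; exact: (linear_funD (FL w z)). Qed.
Lemma trilinD3 u v w z : F (T3 w z (u + v)) = F (T3 w z u) + F (T3 w z v).
Proof. by have [_ _ FL] := FT; exact: (linear_funD (FL w z)). Qed.
Lemma trilinZ1 a u w z : F (T3 (a *: u) w z) = a *: F (T3 u w z).
Proof. by have [FL _ _] := FT; exact: (linear_funZ (FL w z)). Qed.
Lemma trilinZ2 a u w z : F (T3 w (a *: u) z) = a *: F (T3 w u z).
Proof. by have [_ FL _] := FT; exact: (linear_funZ (FL w z)). Qed.
Lemma trilin01 w z : F (T3 0 w z) = 0.
Proof. by have [FL _ _] := FT; exact: (linear_fun0 (FL w z)). Qed.
Lemma trilin02 w z : F (T3 w 0 z) = 0.
Proof. by have [_ FL _] := FT; exact: (linear_fun0 (FL w z)). Qed.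

Lemma trilin_anti12 : (forall a b, F (T3 a a b) = 0) -> forall u v w, F (T3 u v w) = - F (T3 v u w).
Proof.
move=> F0 u v w; apply/eqP; rewrite -addr_eq0; apply/eqP.
by have := F0 (u + v) w; rewrite trilinD1 !trilinD2 !F0 add0r addr0.
Qed.

Lemma trilin_anti23 : (forall a b, F (T3 a b b) = 0) -> forall u v w, F (T3 u v w) = - F (T3 u w v).
Proof.
move=> F0 u v w; apply/eqP; rewrite -addr_eq0; apply/eqP.
by have := F0 u (v + w); rewrite trilinD2 !trilinD3 !F0 add0r addr0.
Qed.

Lemma leib_d3_ce_d3 : alternating F -> forall x, leib_d br F x = ce_d br F x.
Proof.
case/alternating3P => F1 F2 _ x; rewrite [x]tup4_eta leib_d3E ce_d3E.
set a := x _; set b := x _; set c := x _; set d := x _.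
have A12 := trilin_anti12 F1; have A23 := trilin_anti23 F2.
rewrite (br_anti (F _) d) (A12 b (br a c)) (A12 a (br b c)) (A23 b c (br a d)) (A12 b (br a d)).
rewrite (A23 a c (br b d)) (A12 a (br b d)) (A23 a b (br c d)) (A12 a (br c d)).
zmod_cancel.
Qed.

End Trilinear.

(** * Complete Lie algebras *)

Section Complete.
Hypothesis complete : complete_lie br.

Lemma centralr_eq0 c : (forall z, br z c = 0) -> c = 0.
Proof.
move=> cZ; apply: (complete.1 (fun _ => c) _ T0).
split; first by split; [move=> ? [] | exact: alternating0].
by move=> x; rewrite [x]tup1_eta ce_d0E.
Qed.

Lemma centrall_eq0 c : (forall z, br c z = 0) -> c = 0.
Proof. by move=> cZ; apply: centralr_eq0 => z; rewrite br_anti cZ oppr0. Qed.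

Definition derivation (D : V -> V) := forall y z, D (br y z) = br (D y) z + br y (D z).

Lemma derivation_inner (D : V -> V) :
  linear D -> derivation D -> exists c, forall z, D z = br z c.
Proof.
move=> DL DD; have [|h [_ E]] := complete.2 (fun x => D (x ord0)).
  split; first by split; [apply/multilinear1P | exact: alternating1].
  by move=> x; rewrite [x]tup2_eta ce_d1E /= DD (br_anti (D _)); zmod_cancel.
by exists (h T0) => z; have := E (T1 z); rewrite ce_d0E.
Qed.

Definition inner (D : V -> V) : V :=
  if pselect (exists c, forall z, D z = br z c) is left cP then projT1 (cid cP) else 0.

Lemma inner_eq D c : (forall z, D z = br z c) -> inner D = c.
Proof.
move=> cD; rewrite /inner; case: pselect => [cP|[]]; last by exists c.
apply/eqP; rewrite -subr_eq0; apply/eqP; apply: centralr_eq0 => z.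
by rewrite brBr -(projT2 (cid cP)) cD subrr.
Qed.

Lemma innerP D : linear D -> derivation D -> forall z, D z = br z (inner D).
Proof. by move=> DL DD; have [c cD] := derivation_inner DL DD; rewrite (inner_eq cD). Qed.

Lemma leib_cocycle2_diag (f : cochain V 2) : leib_cocycle br f -> forall a, f (T2 a a) = 0.
Proof.
case=> /multilinear2P fB fd a; apply: centralr_eq0 => z.
by rewrite -(leib_d2_diag fB) fd.
Qed.

Lemma leib_cocycle2_ce (f : cochain V 2) : leib_cocycle br f -> ce_cocycle br f.
Proof.
move=> fC; have f0 := leib_cocycle2_diag fC; case: fC => fM fd.
split; first by split; last exact/alternating2P.
by move=> x; rewrite -leib_d2_ce_d2 //; exact/multilinear2P.
Qed.

Lemma ce_cocycle2_leib (f : cochain V 2) : ce_cocycle br f -> leib_cocycle br f.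
Proof.
case=> -[fM /alternating2P f0] fd; split=> // x.
by rewrite leib_d2_ce_d2 //; exact/multilinear2P.
Qed.

Lemma leib_coboundary2_ce (f : cochain V 2) : leib_coboundary br f <-> ce_coboundary br f.
Proof.
split=> -[h [hC E]]; exists h.
  by split; [split=> //; exact: alternating1 | move=> x; rewrite E leib_d1_ce_d1].
by split; [exact: hC.1 | move=> x; rewrite E leib_d1_ce_d1].
Qed.

Lemma HL2_iso_H2 : HL_iso_H br 1.
Proof.
exists id; split=> //.
- exact: leib_cocycle2_ce.
- by move=> f _ /leib_coboundary2_ce.
- by move=> f _ /leib_coboundary2_ce.
- move=> g gC; exists g; split; first exact: ce_cocycle2_leib.
  exists (fun _ => 0); split; first exact: ce_cochain_zero.
  by move=> x; rewrite subrr ce_d_zero //; exact: br0r.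
Qed.

Definition diag_elt (F : cochain V 3) (x : V) : V := inner (fun z => F (T3 x x z)).

Definition corrector (F : cochain V 3) : cochain V 2 :=
  fun y => bilift (fun x => - diag_elt F x) (y ord0) (y (inord 1)).

Definition ce_rep (F : cochain V 3) : cochain V 3 :=
  fun y => F y + leib_d br (corrector F) y.

Lemma correctorE F a b : corrector F (T2 a b) = bilift (fun x => - diag_elt F x) a b.
Proof. by rewrite /corrector /tup /= inordK. Qed.

Lemma corrector_bilinear F : bilinear2 (corrector F).
Proof.
by split=> w a u v; rewrite !correctorE; [apply: bilift_linearl | apply: bilift_linearr].
Qed.

Lemma corrector_eq0 F : (forall a b, F (T3 a a b) = 0) -> forall u v, corrector F (T2 u v) = 0.
Proof.
move=> F0 u v; rewrite correctorE bilift_eq0 // => x.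
by rewrite /diag_elt (@inner_eq _ 0) ?oppr0 // => z; rewrite F0 br0r.
Qed.

Definition leib_cocycle3 (F : cochain V 3) :=
  trilinear3 F /\ forall a b c d, leib_d br F (T4 a b c d) = 0.

Lemma leib_cocycle3P F : leib_cocycle br F -> leib_cocycle3 F.
Proof. by case=> /multilinear3P FT Fd; split=> // a b c d; exact: Fd. Qed.

Section Cocycle3.
Variable F : cochain V 3.
Hypothesis FC : leib_cocycle3 F.

(* Read off from the cocycle identity at (x, x, y, z), where the terms with [x, x] vanish. *)
Lemma diag_derivation x : derivation (fun z => F (T3 x x z)).
Proof.
move=> y z; have := FC.2 x x y z; rewrite leib_d3E brxx (trilin01 FC.1) => E.
by apply/eqP; rewrite -subr_eq0 -oppr_eq0; apply/eqP; apply: etrans _ E; zmod_cancel.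
Qed.

Lemma diag_eltP x z : F (T3 x x z) = br z (diag_elt F x).
Proof. by have [_ _ FL] := FC.1; exact: (innerP (FL x x) (diag_derivation x) z). Qed.

Lemma br_polar_diag_elt x y z :
  br z (polar (fun x => - diag_elt F x) x y) = - (F (T3 x y z) + F (T3 y x z)).
Proof.
rewrite /polar !brBr !brNr -!diag_eltP (trilinD1 FC.1) !(trilinD2 FC.1); zmod_cancel.
Qed.

Lemma diag_elt_quadratic : quadratic (fun x => - diag_elt F x).
Proof.
split=> [a x|y a x x'].
  have -> : diag_elt F (a *: x) = a ^+ 2 *: diag_elt F x; last by rewrite scalerN.
  apply: inner_eq => z.
  by rewrite (trilinZ1 FC.1) (trilinZ2 FC.1) diag_eltP brZr scalerA expr2.
apply/eqP; rewrite -subr_eq0; apply/eqP; apply: centralr_eq0 => z.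
move: (br_polar_diag_elt (a *: x + x') y z) (br_polar_diag_elt x y z) (br_polar_diag_elt x' y z).
move: (polar _ (a *: x + x') y) (polar _ x y) (polar _ x' y) => A B C eA eB eC.
rewrite brBr brDr brZr eA eB eC (trilinD1 FC.1) (trilinD2 FC.1).
by rewrite (trilinZ1 FC.1) (trilinZ2 FC.1) !scalerN !scalerDr; zmod_cancel.
Qed.

Lemma corrector_diag x : corrector F (T2 x x) = - diag_elt F x.
Proof. by rewrite correctorE bilift_diag //; exact: diag_elt_quadratic. Qed.

Lemma ce_rep_trilinear : trilinear3 (ce_rep F).
Proof.
have [F1 F2 F3] := FC.1; have [B1 B2 B3] := leib_d2_trilinear (corrector_bilinear F).
by split=> w z; apply: linear_fun_add.
Qed.

Lemma ce_rep_diag12 x z : ce_rep F (T3 x x z) = 0.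
Proof.
by rewrite /ce_rep (leib_d2_diag (corrector_bilinear F)) corrector_diag diag_eltP brNr subrr.
Qed.

Lemma ce_rep_leib_d a b c d : leib_d br (ce_rep F) (T4 a b c d) = 0.
Proof. by rewrite /ce_rep leib_d3D FC.2 leib_d_d2 ?addr0 //; exact: corrector_bilinear. Qed.

(* Since [ce_rep F] vanishes when its first two arguments agree, the cocycle
   identity at (x, y, y, t) reduces to [ce_rep F (x, y, y), t] = 0. *)
Lemma ce_rep_diag23 x y : ce_rep F (T3 x y y) = 0.
Proof.
apply: centrall_eq0 => t.
have A12 := trilin_anti12 ce_rep_trilinear ce_rep_diag12.
have := ce_rep_leib_d x y y t.
rewrite leib_d3E !ce_rep_diag12 brxx (trilin02 ce_rep_trilinear) (A12 (br x y)) br0r => E.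
by apply: etrans _ E; zmod_cancel.
Qed.

Lemma ce_rep_alternating : alternating (ce_rep F).
Proof.
apply/alternating3P; split=> a b; [exact: ce_rep_diag12 | exact: ce_rep_diag23 |].
by rewrite (trilin_anti12 ce_rep_trilinear ce_rep_diag12) ce_rep_diag23 oppr0.
Qed.

Lemma ce_rep_ce_cocycle : ce_cocycle br (ce_rep F).
Proof.
split; first by split; [apply/multilinear3P/ce_rep_trilinear | exact: ce_rep_alternating].
move=> x; rewrite -leib_d3_ce_d3; first by rewrite [x]tup4_eta; exact: ce_rep_leib_d.
  exact: ce_rep_trilinear.
exact: ce_rep_alternating.
Qed.

End Cocycle3.

Lemma diag_elt_combination a f g : leib_cocycle3 f -> leib_cocycle3 g ->
  forall x, diag_elt (fun y => a *: f y + g y) x = a *: diag_elt f x + diag_elt g x.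
Proof.
move=> fC gC x; apply: inner_eq => z /=.
by rewrite (diag_eltP fC) (diag_eltP gC) brDr brZr.
Qed.

Lemma ce_rep_linear a f g : leib_cocycle3 f -> leib_cocycle3 g ->
  forall x, ce_rep (fun y => a *: f y + g y) x = a *: ce_rep f x + ce_rep g x.
Proof.
move=> fC gC x.
have E u v : corrector (fun y => a *: f y + g y) (T2 u v) =
             a *: corrector f (T2 u v) + corrector g (T2 u v).
  rewrite !correctorE; apply: bilift_combination => y.
  by rewrite diag_elt_combination // opprD scalerN.
by rewrite /ce_rep [x]tup3_eta (leib_d2_combination E) [in RHS]scalerDr; zmod_cancel.
Qed.

(* If [f = d k], then [ce_rep f = d (corrector f + k)] is alternating, which by
   [leib_d2_diag] forces [corrector f + k] to be alternating too. *)
Lemma ce_rep_coboundary f : leib_cocycle3 f -> leib_coboundary br f -> ce_coboundary br (ce_rep f).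
Proof.
move=> fC [k [/multilinear2P kB E]].
pose k' : cochain V 2 := fun y => 1 *: corrector f y + k y.
have k'B : bilinear2 k' by apply: bilinear2_combination => //; exact: corrector_bilinear.
have k'd x : ce_rep f x = leib_d br k' x.
  by rewrite /ce_rep E [x]tup3_eta (@leib_d2_combination k' (corrector f) k 1) // scale1r addrC.
have k'0 a : k' (T2 a a) = 0.
  by apply: centralr_eq0 => z; rewrite -(leib_d2_diag k'B) -k'd ce_rep_diag12.
exists k'; split; first by split; [exact/multilinear2P | exact/alternating2P].
by move=> x; rewrite k'd leib_d2_ce_d2.
Qed.

Lemma ce_rep_coboundary_inv f :
  leib_cocycle3 f -> ce_coboundary br (ce_rep f) -> leib_coboundary br f.
Proof.
move=> fC [k [[/multilinear2P kB /alternating2P k0] E]].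
exists (fun y => (-1) *: corrector f y + k y); split.
  by apply/multilinear2P; apply: bilinear2_combination => //; exact: corrector_bilinear.
move=> x; rewrite [x]tup3_eta (@leib_d2_combination _ (corrector f) k (-1)) //.
by rewrite (leib_d2_ce_d2 kB k0) -E /ce_rep scaleN1r; zmod_cancel.
Qed.

Lemma ce_rep_surjective g : ce_cocycle br g ->
  exists f, leib_cocycle br f /\ ce_coboundary br (fun y => ce_rep f y - g y).
Proof.
case=> -[/multilinear3P gT gA] gd; have [g0 _ _] := (alternating3P g).1 gA.
exists g; split; first by split=> [|x]; [exact/multilinear3P | rewrite leib_d3_ce_d3].
exists (fun _ => 0); split; first exact: ce_cochain_zero.
move=> x; rewrite ce_d_zero; last exact: br0r.
by rewrite /ce_rep [x]tup3_eta leib_d2E !corrector_eq0 // !br0r br0l; zmod_cancel.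
Qed.

Lemma HL3_iso_H3 : HL_iso_H br 2.
Proof.
exists ce_rep; split.
- by move=> f /leib_cocycle3P; exact: ce_rep_ce_cocycle.
- by move=> a f g /leib_cocycle3P fC /leib_cocycle3P gC; exact: ce_rep_linear.
- by move=> f /leib_cocycle3P; exact: ce_rep_coboundary.
- by move=> f /leib_cocycle3P; exact: ce_rep_coboundary_inv.
- exact: ce_rep_surjective.
Qed.

End Complete.
End LieAlgebra.
End Cochains.

Theorem corollary2p9 (K : fieldType) (V : lmodType K) (br : V -> V -> V) :
  is_lie_bracket br -> complete_lie br ->
  HL_iso_H br 1 /\ HL_iso_H br 2.
Proof. by move=> lie complete; split; [exact: HL2_iso_H2 | exact: HL3_iso_H3]. Qed.
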